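(* Let $T$ be a c.n.u. contraction on $H$ and let $(H_+,H_-,\Gamma_+,\Gamma_-)$ be a boundary quadruple for $A_T^{\perp_s}$ with contractive Weyl function $B$. For $s,t\in\mathfrak{H}$, one has $(s,t)\in\widehat{A_T^{\perp_s}}$ if and only if there exist $x_\pm\in H_\pm$ such that $\lambda f_s(\lambda)-f_t(\lambda)=B(\lambda)x_+-x_-$ for all $\lambda\in\mathbb{D}_+$ and $f_s(\lambda)-\lambda f_t(\lambda)=x_+-B(\bar\lambda)^*x_-$ for all $\lambda\in\mathbb{D}_-$.
   Context: $H$ is an infinite-dimensional separable complex Hilbert space with inner product $(\cdot,\cdot)_H$; $T\in\mathbb{B}(H)$, $\|T\|\le1$, is completely non-unitary. $\mathbb{K}=\ker(I-T^*T)$. $\mathbb{H}=H\oplus_\perp H$ with $[(x_1,x_2),(y_1,y_2)]=i(x_1,y_1)_H-i(x_2,y_2)_H$; $S^{\perp_s}=\{a:[a,b]=0\ \forall b\in S\}$; $A_T=\{(x,Tx):x\in\mathbb{K}\}$. $\mathbb{D}_\pm$ are two copies of the open unit disc; for $\lambda\in\mathbb{D}_\pm$, $\bar\lambda$ is regarded as a point of $\mathbb{D}_\mp$. $N_\lambda=\{(x,\lambda x)\}\cap A_T^{\perp_s}$ ($\lambda\in\mathbb{D}_+$), $N_\lambda=\{(\lambda x,x)\}\cap A_T^{\perp_s}$ ($\lambda\in\mathbb{D}_-$). Boundary quadruple: Hilbert spaces $H_\pm$, linear $\Gamma_\pm:A_T^{\perp_s}\to H_\pm$ with $(\Gamma_+,\Gamma_-)$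 bounded, onto $H_+\oplus_\perp H_-$, kernel $A_T$, and $[a,b]=i(\Gamma_+a,\Gamma_+b)-i(\Gamma_-a,\Gamma_-b)$. Contractive Weyl function $B$: for $\lambda\in\mathbb{D}_+$, $\Gamma_+|_{N_\lambda}$ bijective onto $H_+$, $\Gamma_-a=B(\lambda)\Gamma_+a$ on $N_\lambda$, $\|B(\lambda)\|<1$; for $\lambda\in\mathbb{D}_-$, $\Gamma_-|_{N_\lambda}$ bijective onto $H_-$ and $\Gamma_+a=B(\bar\lambda)^*\Gamma_-a$ on $N_\lambda$. $\gamma_\pm,\varphi_\pm$: $\gamma_+(\lambda)x\in N_\lambda$, $\Gamma_+\gamma_+(\lambda)x=x$ ($\lambda\in\mathbb{D}_+$); $\gamma_-(\lambda)x\in N_\lambda$, $\Gamma_-\gamma_-(\lambda)x=x$ ($\lambda\in\mathbb{D}_-$); $\varphi_+=pr_1\circ\gamma_+$, $\varphi_-=pr_2\circ\gamma_-$. $E_\lambda=pr_1(N_\lambda)$ or $pr_2(N_\lambda)$ according as $\lambda\in\mathbb{D}_+$ or $\mathbb{D}_-$; $F^\dagger_\lambda=E_{\bar\lambda}$, $F_\lambda$ its conjugate-linear dual, pairing $((\cdot,\cdot))$. For $x\in H$, $\hat x(\lambda)\in F_\lambda$ is $\omega\mapsto(x,\omega)_H$; $x\mapsto\hat x$ is injective, and $\mathfrak{H}=\{\hat x:x\in H\}$ with $(\hat x,\hat y)_{\mathfrak{H}}=(x,y)_H$. For $S\subseteq\mathbb{H}$, $\hat S=\{(\hat x,\hat y):(x,y)\in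 S\}$. Trivialization: for $\lambda\in\mathbb{D}_+$, $(\varphi_-^\dagger(\lambda)\omega,z)_{H_-}=((\omega,\varphi_-(\bar\lambda)z))$; for $\lambda\in\mathbb{D}_-$, $(\varphi_+^\dagger(\lambda)\omega,z)_{H_+}=((\omega,\varphi_+(\bar\lambda)z))$; $f_s(\lambda)=\varphi_-^\dagger(\lambda)s(\lambda)$ on $\mathbb{D}_+$ and $\varphi_+^\dagger(\lambda)s(\lambda)$ on $\mathbb{D}_-$. *)

From mathcomp Require Import all_boot all_order all_algebra.
From mathcomp Require Export reals complex.
Set Implicit Arguments. Unset Strict Implicit. Unset Printing Implicit Defensive.
Import Order.TTheory GRing.Theory Num.Theory.
Local Open Scope ring_scope.
Local Open Scope complex_scope.

Section Defs.
Context {R : realType}.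
Local Notation C := R[i].

Definition inner_product (V : lmodType C) (ip : V -> V -> C) : Prop :=
  (forall (a : C) (x y z : V), ip (a *: x + y) z = a * ip x z + ip y z) /\
  (forall x y : V, ip y x = (ip x y)^*) /\
  (forall x : V, 0 <= ip x x) /\
  (forall x : V, ip x x = 0 -> x = 0).

Definition hnorm (V : lmodType C) (ip : V -> V -> C) (x : V) : C := sqrtC (ip x x).

Definition cvg_to (V : lmodType C) (ip : V -> V -> C) (u : nat -> V) (x : V) : Prop :=
  forall e : C, 0 < e -> exists N : nat, forall n, (N <= n)%N -> hnorm ip (u n - x) < e.

Definition cauchy_seq (V : lmodType C) (ip : V -> V -> C) (u : nat -> V) : Prop :=
  forall e : C, 0 < e -> exists N : nat, forall m n, (N <= m)%N -> (N <= n)%N ->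
    hnorm ip (u m - u n) < e.

Definition complete_ip (V : lmodType C) (ip : V -> V -> C) : Prop :=
  forall u : nat -> V, cauchy_seq ip u -> exists x, cvg_to ip u x.

Definition hilbert (V : lmodType C) (ip : V -> V -> C) : Prop :=
  inner_product ip /\ complete_ip ip.

Definition separable (V : lmodType C) (ip : V -> V -> C) : Prop :=
  exists e : nat -> V, forall (x : V) (eps : C), 0 < eps ->
    exists (n : nat) (c : 'I_n -> C), hnorm ip (x - \sum_(i < n) c i *: e i) < eps.

Definition infinite_dim (V : lmodType C) : Prop :=
  forall (n : nat) (e : 'I_n -> V), exists x : V,
    ~ (exists c : 'I_n -> C, x = \sum_(i < n) c i *: e i).

Definition lin_on (U V : lmodType C) (P : U -> Prop) (f : U -> V) : Prop :=
  forall (a : C) (x y : U), P x -> P y -> f (a *: x + y) = a *: f x + f y.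

Definition linear_map (U V : lmodType C) (f : U -> V) : Prop := lin_on (fun _ => True) f.

Definition is_adjoint (U V : lmodType C) (ipU : U -> U -> C) (ipV : V -> V -> C)
  (T : U -> V) (Tadj : V -> U) : Prop :=
  forall (x : U) (y : V), ipV (T x) y = ipU x (Tadj y).

Definition contraction (V : lmodType C) (ip : V -> V -> C) (T : V -> V) : Prop :=
  linear_map T /\ forall x, hnorm ip (T x) <= hnorm ip x.

Definition subspace (V : lmodType C) (M : V -> Prop) : Prop :=
  M 0 /\ forall (a : C) (x y : V), M x -> M y -> M (a *: x + y).

Definition closed_set (V : lmodType C) (ip : V -> V -> C) (M : V -> Prop) : Prop :=
  forall (u : nat -> V) (x : V), (forall n, M (u n)) -> cvg_to ip u x -> M x.

(* completely non-unitary: no nonzero closed reducing subspace on which T is unitary *)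
Definition cnu (V : lmodType C) (ip : V -> V -> C) (T Tadj : V -> V) : Prop :=
  forall M : V -> Prop, subspace M -> closed_set ip M ->
    (forall x, M x -> M (T x)) -> (forall x, M x -> M (Tadj x)) ->
    (forall x, M x -> Tadj (T x) = x /\ T (Tadj x) = x) ->
    forall x, M x -> x = 0.

Definition krein (V : lmodType C) (ip : V -> V -> C) (a b : V * V) : C :=
  'i * ip a.1 b.1 - 'i * ip a.2 b.2.

Definition Kset (V : lmodType C) (T Tadj : V -> V) (x : V) : Prop := Tadj (T x) = x.

Definition AT (V : lmodType C) (T Tadj : V -> V) (a : V * V) : Prop :=
  exists x, Kset T Tadj x /\ a = (x, T x).

Definition ATperp (V : lmodType C) (ip : V -> V -> C) (T Tadj : V -> V) (a : V * V) : Prop :=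
  forall b, AT T Tadj b -> krein ip a b = 0.

Definition disc (l : C) : Prop := `|l| < 1.

(* N_lambda for lambda in D_+ (Nplus) and lambda in D_- (Nminus), P = A_T^{perp_s} *)
Definition Nplus (V : lmodType C) (P : V * V -> Prop) (l : C) (a : V * V) : Prop :=
  a.2 = l *: a.1 /\ P a.
Definition Nminus (V : lmodType C) (P : V * V -> Prop) (l : C) (a : V * V) : Prop :=
  a.1 = l *: a.2 /\ P a.

Definition Eplus (V : lmodType C) (P : V * V -> Prop) (l : C) (w : V) : Prop :=
  exists a, Nplus P l a /\ a.1 = w.
Definition Eminus (V : lmodType C) (P : V * V -> Prop) (l : C) (w : V) : Prop :=
  exists a, Nminus P l a /\ a.2 = w.

Definition boundary_quadruple (V Hp Hm : lmodType C) (ip : V -> V -> C)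
  (ipp : Hp -> Hp -> C) (ipm : Hm -> Hm -> C) (P : V * V -> Prop)
  (Gp : V * V -> Hp) (Gm : V * V -> Hm) (T Tadj : V -> V) : Prop :=
  hilbert ipp /\ hilbert ipm /\
  lin_on P Gp /\ lin_on P Gm /\
  (exists c : C, forall a, P a ->
      ipp (Gp a) (Gp a) + ipm (Gm a) (Gm a) <= c * (ip a.1 a.1 + ip a.2 a.2)) /\
  (forall (u : Hp) (v : Hm), exists a, P a /\ Gp a = u /\ Gm a = v) /\
  (forall a, P a -> (Gp a = 0 /\ Gm a = 0 <-> AT T Tadj a)) /\
  (forall a b, P a -> P b ->
      krein ip a b = 'i * ipp (Gp a) (Gp b) - 'i * ipm (Gm a) (Gm b)).

Definition contractive_weyl (V Hp Hm : lmodType C) (ipp : Hp -> Hp -> C)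
  (ipm : Hm -> Hm -> C) (P : V * V -> Prop) (Gp : V * V -> Hp) (Gm : V * V -> Hm)
  (B : C -> Hp -> Hm) (Bstar : C -> Hm -> Hp) : Prop :=
  (forall l, disc l -> is_adjoint ipp ipm (B l) (Bstar l)) /\
  (forall l, disc l ->
     (forall u : Hp, exists a, Nplus P l a /\ Gp a = u) /\
     (forall a b, Nplus P l a -> Nplus P l b -> Gp a = Gp b -> a = b) /\
     (forall a, Nplus P l a -> Gm a = B l (Gp a)) /\
     (exists c : C, c < 1 /\ forall u, hnorm ipm (B l u) <= c * hnorm ipp u)) /\
  (forall l, disc l ->
     (forall v : Hm, exists a, Nminus P l a /\ Gm a = v) /\
     (forall a b, Nminus P l a -> Nminus P l b -> Gm a = Gm b -> a = b) /\
     (forall a, Nminus P l a -> Gp a = Bstar l^* (Gm a))).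

Definition gamma_plus (V Hp : lmodType C) (P : V * V -> Prop) (Gp : V * V -> Hp)
  (gp : C -> Hp -> V * V) : Prop :=
  forall l, disc l -> forall u, Nplus P l (gp l u) /\ Gp (gp l u) = u.
Definition gamma_minus (V Hm : lmodType C) (P : V * V -> Prop) (Gm : V * V -> Hm)
  (gm : C -> Hm -> V * V) : Prop :=
  forall l, disc l -> forall v, Nminus P l (gm l v) /\ Gm (gm l v) = v.

Definition phi_plus (V Hp : lmodType C) (gp : C -> Hp -> V * V) (l : C) (u : Hp) : V :=
  (gp l u).1.
Definition phi_minus (V Hm : lmodType C) (gm : C -> Hm -> V * V) (l : C) (v : Hm) : V :=
  (gm l v).2.

(* fm l x = f_{hat x}(l) = phi_-^dagger(l) (hat x (l)) for l in D_+ ;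
   ((hat x (l), phi_-(conj l) z)) = (x, phi_-(conj l) z)_H *)
Definition triv_minus (V Hm : lmodType C) (ip : V -> V -> C) (ipm : Hm -> Hm -> C)
  (gm : C -> Hm -> V * V) (fm : C -> V -> Hm) : Prop :=
  forall l, disc l -> forall (x : V) (z : Hm), ipm (fm l x) z = ip x (phi_minus gm l^* z).
(* fp l x = f_{hat x}(l) = phi_+^dagger(l) (hat x (l)) for l in D_- *)
Definition triv_plus (V Hp : lmodType C) (ip : V -> V -> C) (ipp : Hp -> Hp -> C)
  (gp : C -> Hp -> V * V) (fp : C -> V -> Hp) : Prop :=
  forall l, disc l -> forall (x : V) (z : Hp), ipp (fp l x) z = ip x (phi_plus gp l^* z).

(* hat x = hat x' as elements of frak H: equal as functionals on
   F^dagger_l = E_{conj l} for every l in D_+ and every l in D_- *)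
Definition hat_eq (V : lmodType C) (ip : V -> V -> C) (P : V * V -> Prop) (x x' : V) : Prop :=
  forall l, disc l ->
    (forall w, Eminus P l^* w -> ip x w = ip x' w) /\
    (forall w, Eplus P l^* w -> ip x w = ip x' w).

Definition in_hatA (V : lmodType C) (ip : V -> V -> C) (T Tadj : V -> V) (x y : V) : Prop :=
  exists x' y', ATperp ip T Tadj (x', y') /\
    hat_eq ip (ATperp ip T Tadj) x x' /\ hat_eq ip (ATperp ip T Tadj) y y'.

End Defs.

From mathcomp Require Import all_boot all_order all_algebra.
From mathcomp Require Import reals complex.
From mathcomp Require Import ring lra.
Set Implicit Arguments. Unset Strict Implicit. Unset Printing Implicit Defensive.
Import Order.TTheory GRing.Theory Num.Theory.
Local Open Scope ring_scope.
Local Open Scope complex_scope.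

(* Forward: if (x', y') in A_T^{perp_s} represents (s, t), put x_+- = Gamma_+-(x', y').
   Pairing Green's identity for (x', y') with gamma_-(conj l) z (resp. gamma_+(conj l) z)
   yields the two Weyl-function identities, and f_s, f_t only see s, t on E_{conj l}.
   Backward: pick a in A_T^{perp_s} with Gamma_+- a = x_+-.  Reading the identities the
   same way, d = x - a.1 and e = y - a.2 satisfy (d, n.1) = (e, n.2) for every n in
   every N_mu.  Testing with (h - T^*T h, 0) and (0, h - TT^* h), both in N_0, gives
   d in KK and e - T d = T k with k in KK orthogonal to every pr_1 N_mu.  Then
   (x + k, y) = a + (d, T d) + (k, T k) lies in A_T^{perp_s} and still represents
   (s, t), provided k is also orthogonal to pr_2 N_0 in D_-; this last point follows by
   approximating N_0 by N_r, r -> 0+, since Green's identity on N_r - N_0 (where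
   Gamma_- vanishes) bounds the distance of the second components by 2 r. *)

Lemma le_sqr_bound_eq0 (R : realFieldType) (Q M : R) :
  0 <= Q -> (forall r, 0 < r -> r <= 1 / 2 -> Q <= r ^+ 2 * M) -> Q = 0.
Proof.
move=> Q_ge0 bound; apply/eqP; rewrite eq_le Q_ge0 andbT leNgt; apply/negP => Q_gt0.
have half_gt0 : 0 < 1 / 2 :> R by lra.
have M_gt0 : 0 < M by have := bound _ half_gt0 (lexx _); nra.
pose r := Q / (2 * (Q + M)).
have rE : r * (2 * (Q + M)) = Q by rewrite divfK // gt_eqF //; lra.
have r_gt0 : 0 < r by rewrite divr_gt0 //; lra.
have r_le : r <= 1 / 2 by nra.
have := bound r r_gt0 r_le; nra.
Qed.

Lemma disc0 (R : realType) : disc (0 : R[i]).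
Proof. by rewrite /disc normr0 ltr01. Qed.

Lemma disc_conjc (R : realType) (l : R[i]) : disc l -> disc l^*.
Proof. by case: l => a b; rewrite /disc !normc_def /= sqrrN. Qed.

Lemma disc_real (R : realType) (r : R) : 0 <= r -> r < 1 -> disc r%:C.
Proof.
by move=> r_ge0 r_lt1; rewrite /disc ger0_norm ?ler0c // -(rmorph1 (real_complex R)) ltcR.
Qed.

Section InnerProduct.
Variables (R : realType) (V : lmodType R[i]) (ip : V -> V -> R[i]).
Hypothesis hip : inner_product ip.

Lemma ipDl x y z : ip (x + y) z = ip x z + ip y z.
Proof. by have := hip.1 1 x y z; rewrite scale1r mul1r. Qed.

Lemma ip0l z : ip 0 z = 0.
Proof. by apply: (@addrI _ (ip 0 z)); rewrite -ipDl !addr0. Qed.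

Lemma ipZl a x z : ip (a *: x) z = a * ip x z.
Proof. by have := hip.1 a x 0 z; rewrite addr0 ip0l addr0. Qed.

Lemma ipNl x z : ip (- x) z = - ip x z.
Proof. by rewrite -scaleN1r ipZl mulN1r. Qed.

Lemma ipBl x y z : ip (x - y) z = ip x z - ip y z.
Proof. by rewrite ipDl ipNl. Qed.

Lemma ipC x y : ip y x = conjc (ip x y).
Proof. exact: hip.2.1. Qed.

Lemma ipDr x y z : ip z (x + y) = ip z x + ip z y.
Proof. by rewrite ipC ipDl rmorphD /= -!ipC. Qed.

Lemma ip0r z : ip z 0 = 0.
Proof. by rewrite ipC ip0l conjc0. Qed.

Lemma ipZr a x z : ip z (a *: x) = conjc a * ip z x.
Proof. by rewrite ipC ipZl rmorphM /= -ipC. Qed.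

Lemma ipNr x z : ip z (- x) = - ip z x.
Proof. by rewrite ipC ipNl rmorphN /= -ipC. Qed.

Lemma ipBr x y z : ip z (x - y) = ip z x - ip z y.
Proof. by rewrite ipDr ipNr. Qed.

Lemma ipl_inj u v : (forall z, ip u z = ip v z) -> u = v.
Proof.
move=> eq_uv; apply/eqP; rewrite -subr_eq0; apply/eqP/hip.2.2.2.
by rewrite ipBl eq_uv subrr.
Qed.

Definition sqnorm x : R := complex.Re (ip x x).

Lemma sqnormE x : ip x x = (sqnorm x)%:C.
Proof. by have := ger0_Im (hip.2.2.1 x); rewrite /sqnorm; case: (ip x x) => a b /= ->. Qed.

Lemma sqnorm_ge0 x : 0 <= sqnorm x.
Proof. by have := hip.2.2.1 x; rewrite sqnormE ler0c. Qed.

Lemma sqnorm_eq0 x : sqnorm x = 0 -> x = 0.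
Proof. by move=> x0; apply: hip.2.2.2; rewrite sqnormE x0. Qed.

Lemma sqnorm_parallelogram x y :
  sqnorm (x + y) + sqnorm (x - y) = (sqnorm x + sqnorm y) *+ 2.
Proof.
apply: complexI; rewrite rmorphD rmorphMn rmorphD /= -!sqnormE.
rewrite !(ipDl, ipDr, ipNl, ipNr); ring.
Qed.

Lemma mulcJ_Re (c : R[i]) : c * conjc c = (complex.Re (c * conjc c))%:C.
Proof. by have := ger0_Im (mulcJ_ge0 c); case: (c * c^*) => a b /= ->. Qed.

Lemma Cauchy_Schwarz x y :
  complex.Re (ip x y * conjc (ip x y)) <= sqnorm x * sqnorm y.
Proof.
have [/sqnorm_eq0 -> | y_neq0] := eqVneq (sqnorm y) 0.
  by rewrite ip0r mul0r /sqnorm ip0l mulr0.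
have y_gt0 : 0 < sqnorm y by rewrite lt_def y_neq0 sqnorm_ge0.
set c := ip x y; set b := (sqnorm y)%:C.
have expand : ip (b *: x - c *: y) (b *: x - c *: y) =
    (sqnorm y * (sqnorm y * sqnorm x - complex.Re (c * conjc c)))%:C.
  rewrite !(ipBl, ipBr, ipZl, ipZr) (ipC x y) -/c /b conjc_real.
  rewrite rmorphM rmorphB rmorphM /= -mulcJ_Re -!sqnormE; ring.
have := hip.2.2.1 (b *: x - c *: y).
by rewrite expand ler0c pmulr_rge0 // subr_ge0 [sqnorm y * _]mulrC.
Qed.

Lemma selfadjoint_fixpoint (S : V -> V) d :
  (forall x y, ip (S x) y = ip x (S y)) -> (forall h, ip d (h - S h) = 0) -> S d = d.
Proof.
move=> S_sym d_orth; apply/eqP; rewrite eq_sym -subr_eq0; apply/eqP/sqnorm_eq0/complexI.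
by rewrite -sqnormE {1}ipBl S_sym -ipBr d_orth rmorph0.
Qed.

End InnerProduct.

Section ATperp.
Variables (R : realType) (V : lmodType R[i]) (ip : V -> V -> R[i]) (T Tadj : V -> V).
Hypotheses (hip : inner_product ip) (adj : is_adjoint ip ip T Tadj).
Local Notation P := (ATperp ip T Tadj).

Lemma adjointC x y : ip (Tadj y) x = ip y (T x).
Proof. by rewrite (ipC hip) -adj -(ipC hip). Qed.

Lemma ATperp_comb c a b : P a -> P b -> P (c *: a + b).
Proof.
move=> Pa Pb m Am; transitivity (c * krein ip a m + krein ip b m).
  by rewrite /krein /= !(ipDl hip) !(ipZl hip); ring.
by rewrite Pa // Pb // mulr0 addr0.
Qed.

Lemma ATperpD a b : P a -> P b -> P (a + b).
Proof. by move=> Pa Pb; rewrite -[a]scale1r; exact: ATperp_comb. Qed.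

Lemma ATperp_graph m : Kset T Tadj m -> P (m, T m).
Proof. by move=> Km _ [k [Kk ->]]; rewrite /krein /= adj Kk subrr. Qed.

Lemma ATperp_Kset n m : P n -> Kset T Tadj m -> ip m n.1 = ip (T m) n.2.
Proof.
move=> Pn Km; have /eqP := Pn (m, T m) (ex_intro _ m (conj Km erefl)).
rewrite /krein /= subr_eq0 => /eqP /(mulfI (@neq0Ci R[i])) e.
by rewrite (ipC hip) e -(ipC hip).
Qed.

Lemma Nplus0_defect h : Nplus P 0 (h - Tadj (T h), 0).
Proof.
split; first by rewrite scale0r.
move=> _ [m [Km ->]]; rewrite /krein /= (ip0l hip) mulr0 subr0 (ipBl hip) adjointC adj Km.
by rewrite subrr mulr0.
Qed.

Lemma Nminus0_defect h : Nminus P 0 (0, h - T (Tadj h)).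
Proof.
split; first by rewrite scale0r.
move=> _ [m [Km ->]]; rewrite /krein /= (ip0l hip) mulr0 sub0r (ipBl hip) adj Km adjointC.
by rewrite subrr mulr0 oppr0.
Qed.

Lemma orth_N_decomp d e :
  (forall mu n, disc mu -> Nplus P mu n \/ Nminus P mu n -> ip d n.1 = ip e n.2) ->
  Kset T Tadj d /\ exists k, [/\ Kset T Tadj k, T k = e - T d &
    forall mu n, disc mu -> Nplus P mu n \/ Nminus P mu n -> ip k n.1 = 0].
Proof.
move=> de_orth.
have Kd : Kset T Tadj d.
  apply: (selfadjoint_fixpoint (S := Tadj \o T) hip) => [x y | h] /=.
    by rewrite adjointC adj.
  by rewrite (de_orth 0 _ (disc0 R) (or_introl (Nplus0_defect h))) (ip0r hip).
have g_orth mu n : disc mu -> Nplus P mu n \/ Nminus P mu n -> ip (e - T d) n.2 = 0.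
  move=> hmu Nn; have Pn : P n by case: Nn => -[].
  by rewrite (ipBl hip) -(de_orth _ _ hmu Nn) (ATperp_Kset Pn Kd) subrr.
have TTadj_g : T (Tadj (e - T d)) = e - T d.
  apply: (selfadjoint_fixpoint (S := T \o Tadj) hip) => [x y | h] /=.
    by rewrite adj adjointC.
  exact: g_orth 0 _ (disc0 R) (or_intror (Nminus0_defect h)).
have Kk : Kset T Tadj (Tadj (e - T d)) by rewrite /Kset TTadj_g.
split=> //; exists (Tadj (e - T d)); split=> // mu n hmu Nn.
have Pn : P n by case: Nn => -[].
by rewrite (ATperp_Kset Pn Kk) TTadj_g (g_orth mu).
Qed.

End ATperp.

Section BoundaryQuadruple.
Variables (R : realType) (V Hp Hm : lmodType R[i]).
Variables (ip : V -> V -> R[i]) (ipp : Hp -> Hp -> R[i]) (ipm : Hm -> Hm -> R[i]).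
Variables (T Tadj : V -> V) (Gp : V * V -> Hp) (Gm : V * V -> Hm).
Variables (B : R[i] -> Hp -> Hm) (Bstar : R[i] -> Hm -> Hp).
Variables (gp : R[i] -> Hp -> V * V) (gm : R[i] -> Hm -> V * V).
Variables (fp : R[i] -> V -> Hp) (fm : R[i] -> V -> Hm).
Hypotheses (hip : inner_product ip) (hipp : inner_product ipp) (hipm : inner_product ipm).
Hypothesis adj : is_adjoint ip ip T Tadj.
Local Notation P := (ATperp ip T Tadj).
Hypothesis green : forall a b, P a -> P b ->
  krein ip a b = 'i * ipp (Gp a) (Gp b) - 'i * ipm (Gm a) (Gm b).
Hypothesis Gm_lin : lin_on P Gm.
Hypothesis Gpm_onto : forall u v, exists a, P a /\ Gp a = u /\ Gm a = v.
Hypothesis B_adj : forall l, disc l -> is_adjoint ipp ipm (B l) (Bstar l).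
Hypothesis Gp_inj : forall l, disc l ->
  forall a b, Nplus P l a -> Nplus P l b -> Gp a = Gp b -> a = b.
Hypothesis Gm_inj : forall l, disc l ->
  forall a b, Nminus P l a -> Nminus P l b -> Gm a = Gm b -> a = b.
Hypothesis Gm_Nplus : forall l, disc l -> forall a, Nplus P l a -> Gm a = B l (Gp a).
Hypothesis Gp_Nminus : forall l, disc l ->
  forall a, Nminus P l a -> Gp a = Bstar l^* (Gm a).
Hypotheses (gpH : gamma_plus P Gp gp) (gmH : gamma_minus P Gm gm).
Hypotheses (fpH : triv_plus ip ipp gp fp) (fmH : triv_minus ip ipm gm fm).

Lemma gamma_plus_Gp mu n : disc mu -> Nplus P mu n -> gp mu (Gp n) = n.
Proof. by move=> hmu Nn; have [Ng Gg] := gpH hmu (Gp n); apply: Gp_inj Ng Nn Gg. Qed.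

Lemma gamma_minus_Gm mu n : disc mu -> Nminus P mu n -> gm mu (Gm n) = n.
Proof. by move=> hmu Nn; have [Ng Gg] := gmH hmu (Gm n); apply: Gm_inj Ng Nn Gg. Qed.

Lemma fm_ATperp a l : P a -> disc l -> l *: fm l a.1 - fm l a.2 = B l (Gp a) - Gm a.
Proof.
move=> Pa hl; apply: (ipl_inj hipm) => z.
have [[n1 Pn] Gmn] := gmH (disc_conjc hl) z.
have Gpn := Gp_Nminus (disc_conjc hl) (conj n1 Pn); rewrite conjcK Gmn in Gpn.
have := green Pa Pn; rewrite /krein n1 (ipZr hip) conjcK Gpn Gmn => e.
rewrite !(ipBl hipm) (ipZl hipm) !fmH // /phi_minus (B_adj hl).
by apply: (mulfI (@neq0Ci R[i])); rewrite !mulrBr -e; ring.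
Qed.

Lemma fp_ATperp a l : P a -> disc l ->
  fp l a.1 - l *: fp l a.2 = Gp a - Bstar l^* (Gm a).
Proof.
move=> Pa hl; apply: (ipl_inj hipp) => z.
have [[n2 Pn] Gpn] := gpH (disc_conjc hl) z.
have Gmn := Gm_Nplus (disc_conjc hl) (conj n2 Pn); rewrite Gpn in Gmn.
have := green Pa Pn; rewrite /krein n2 (ipZr hip) conjcK Gpn Gmn => e.
rewrite !(ipBl hipp) (ipZl hipp) !fpH // /phi_plus (ipC hipp z (Bstar _ _)).
rewrite -(B_adj (disc_conjc hl)) -(ipC hipm).
by apply: (mulfI (@neq0Ci R[i])); rewrite !mulrBr -e; ring.
Qed.

Lemma hat_eq_fm x x' l : hat_eq ip P x x' -> disc l -> fm l x = fm l x'.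
Proof.
move=> hx hl; apply: (ipl_inj hipm) => z; rewrite !fmH //; apply: (hx l hl).1.
by exists (gm l^* z); split; first exact: (gmH (disc_conjc hl) z).1.
Qed.

Lemma hat_eq_fp x x' l : hat_eq ip P x x' -> disc l -> fp l x = fp l x'.
Proof.
move=> hx hl; apply: (ipl_inj hipp) => z; rewrite !fpH //; apply: (hx l hl).2.
by exists (gp l^* z); split; first exact: (gpH (disc_conjc hl) z).1.
Qed.

Lemma in_hatA_weyl x y : in_hatA ip T Tadj x y -> exists (xp : Hp) (xm : Hm),
  (forall l, disc l -> l *: fm l x - fm l y = B l xp - xm) /\
  (forall l, disc l -> fp l x - l *: fp l y = xp - Bstar l^* xm).
Proof.
case=> x' [y' [Pa [hx hy]]]; exists (Gp (x', y')), (Gm (x', y')); split=> l hl.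
- by rewrite (hat_eq_fm hx hl) (hat_eq_fm hy hl); exact: fm_ATperp Pa hl.
- by rewrite (hat_eq_fp hx hl) (hat_eq_fp hy hl); exact: fp_ATperp Pa hl.
Qed.

Lemma weyl_orth_N x y a : P a ->
  (forall l, disc l -> l *: fm l x - fm l y = B l (Gp a) - Gm a) ->
  (forall l, disc l -> fp l x - l *: fp l y = Gp a - Bstar l^* (Gm a)) ->
  forall mu n, disc mu -> Nplus P mu n \/ Nminus P mu n ->
    ip (x - a.1) n.1 = ip (y - a.2) n.2.
Proof.
move=> Pa Ex Ey mu n hmu [Nn | Nn]; have hl := disc_conjc hmu.
- have := congr1 (ipp^~ (Gp n)) (Ey _ hl); rewrite -(fp_ATperp Pa hl) /=.
  rewrite !(ipBl hipp) !(ipZl hipp) !fpH // conjcK /phi_plus gamma_plus_Gp //.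
  rewrite Nn.1 (ipZr hip) !(ipBl hip) => /eqP; rewrite -subr_eq0 => /eqP e.
  by apply/eqP; rewrite -subr_eq0 -e; apply/eqP; ring.
- have := congr1 (ipm^~ (Gm n)) (Ex _ hl); rewrite -(fm_ATperp Pa hl) /=.
  rewrite !(ipBl hipm) !(ipZl hipm) !fmH // conjcK /phi_minus gamma_minus_Gm //.
  rewrite Nn.1 (ipZr hip) !(ipBl hip) => /eqP; rewrite -subr_eq0 => /eqP e.
  by apply/eqP; rewrite -subr_eq0 -e; apply/eqP; ring.
Qed.

Lemma Nminus0_approx n0 r : Nminus P 0 n0 -> 0 < r -> r <= 1 / 2 ->
  exists2 n, Nminus P r%:C n &
    sqnorm ip (n.2 - n0.2) <= 4 * r ^+ 2 * sqnorm ip n0.2.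
Proof.
move=> [n01 Pn0] r_gt0 r_le; have hr : disc r%:C by apply: disc_real; lra.
have [[n1 Pn] Gmn] := gmH hr (Gm n0).
set n := gm r%:C (Gm n0) in n1 Pn Gmn *.
exists n => //.
have Pd := ATperp_comb hip (-1) Pn0 Pn.
have Gd : Gm (-1 *: n0 + n) = 0 by rewrite Gm_lin // Gmn scaleN1r addNr.
have := green Pd Pd; rewrite Gd (ip0l hipm) mulr0 subr0 /krein /= n01 n1.
rewrite scale0r scaler0 add0r scaleN1r (addrC (- n0.2)) -mulrBr.
move=> /(mulfI (@neq0Ci R[i])); rewrite (ipZl hip) (ipZr hip) conjc_real.
rewrite !(sqnormE hip) (sqnormE hipp) -!rmorphM -rmorphB => /complexI.
set u := n.2 - n0.2 => green_d.
have par := sqnorm_parallelogram hip u n0.2; rewrite {1}/u subrK in par.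
have u_le : sqnorm ip u <= r ^+ 2 * sqnorm ip n.2.
  by have := sqnorm_ge0 hipp (Gp (-1 *: n0 + n)); rewrite expr2; lra.
have n2_le : r ^+ 2 * sqnorm ip n.2 <= r ^+ 2 * (sqnorm ip u + sqnorm ip n0.2) *+ 2.
  by rewrite -mulrnAr ler_wpM2l ?sqr_ge0 //; have := sqnorm_ge0 hip (u - n0.2); lra.
have : 0 <= (1 / 4 - r ^+ 2) * sqnorm ip u.
  by rewrite mulr_ge0 ?sqnorm_ge0 // subr_ge0; nra.
nra.
Qed.

Lemma Nminus0_orth k n0 :
  (forall mu n, disc mu -> Nminus P mu n -> ip k n.1 = 0) ->
  Nminus P 0 n0 -> ip k n0.2 = 0.
Proof.
move=> k_orth N0; set c := ip k n0.2.
suff : complex.Re (c * conjc c) = 0.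
  move=> c0; have /eqP : c * conjc c = 0 by rewrite mulcJ_Re c0.
  by rewrite mulf_eq0 conjc_eq0 orbb => /eqP.
apply: (le_sqr_bound_eq0 (M := 4 * sqnorm ip k * sqnorm ip n0.2)).
  by have := mulcJ_ge0 c; rewrite lecE => /andP[].
move=> r r_gt0 r_le; have [n Nn close] := Nminus0_approx N0 r_gt0 r_le.
have kn : ip k n.2 = 0.
  have r_disc : disc r%:C by apply: disc_real; lra.
  have /eqP := k_orth _ _ r_disc Nn; rewrite Nn.1 (ipZr hip) conjc_real mulf_eq0.
  by rewrite eq_complex /= (gt_eqF r_gt0) => /eqP.
have -> : c = - ip k (n.2 - n0.2) by rewrite (ipBr hip) kn sub0r opprK.
rewrite rmorphN mulrNN /=; apply: le_trans (Cauchy_Schwarz hip _ _) _.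
have := ler_wpM2l (sqnorm_ge0 hip k) close; nra.
Qed.

Lemma Nminus_orth_snd k mu n :
  (forall mu n, disc mu -> Nminus P mu n -> ip k n.1 = 0) ->
  disc mu -> Nminus P mu n -> ip k n.2 = 0.
Proof.
move=> k_orth hmu Nn; have [mu0 | mu_neq0] := eqVneq mu 0.
  by move: Nn; rewrite mu0; exact: Nminus0_orth.
have /eqP := k_orth _ _ hmu Nn; rewrite Nn.1 (ipZr hip) mulf_eq0 conjc_eq0.
by rewrite (negbTE mu_neq0) => /eqP.
Qed.

Lemma weyl_in_hatA x y xp xm :
  (forall l, disc l -> l *: fm l x - fm l y = B l xp - xm) ->
  (forall l, disc l -> fp l x - l *: fp l y = xp - Bstar l^* xm) ->
  in_hatA ip T Tadj x y.
Proof.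
have [a [Pa [<- <-]]] := Gpm_onto xp xm => Ex Ey.
have [Kd [k [Kk Tk k_orth]]] := orth_N_decomp hip adj (weyl_orth_N Pa Ex Ey).
have k_orth_minus mu n : disc mu -> Nminus P mu n -> ip k n.1 = 0.
  by move=> hmu Nn; exact: k_orth hmu (or_intror Nn).
exists (x + k), y; split; [|split=> l hl; split=> w [n [Nn <-]] //].
- have -> : (x + k, y) = a + ((x - a.1, T (x - a.1)) + (k, T k)).
    by congr (_, _); rewrite /= ?Tk; [rewrite addrA subrKC | rewrite !subrKC].
  by apply: (ATperpD hip) => //; apply: (ATperpD hip); apply: (ATperp_graph adj).
- by rewrite (ipDl hip) (Nminus_orth_snd k_orth_minus (disc_conjc hl) Nn) addr0.
- by rewrite (ipDl hip) (k_orth _ _ (disc_conjc hl) (or_introl Nn)) addr0.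
Qed.

End BoundaryQuadruple.

Theorem proposition4p15 (R : realType)
  (H : lmodType R[i]) (ip : H -> H -> R[i])
  (T Tadj : H -> H)
  (Hp Hm : lmodType R[i]) (ipp : Hp -> Hp -> R[i]) (ipm : Hm -> Hm -> R[i])
  (Gp : H * H -> Hp) (Gm : H * H -> Hm)
  (B : R[i] -> Hp -> Hm) (Bstar : R[i] -> Hm -> Hp)
  (gp : R[i] -> Hp -> H * H) (gm : R[i] -> Hm -> H * H)
  (fp : R[i] -> H -> Hp) (fm : R[i] -> H -> Hm) :
  hilbert ip -> separable ip -> infinite_dim H ->
  contraction ip T -> is_adjoint ip ip T Tadj -> cnu ip T Tadj ->
  boundary_quadruple ip ipp ipm (ATperp ip T Tadj) Gp Gm T Tadj ->
  contractive_weyl ipp ipm (ATperp ip T Tadj) Gp Gm B Bstar ->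
  gamma_plus (ATperp ip T Tadj) Gp gp ->
  gamma_minus (ATperp ip T Tadj) Gm gm ->
  triv_plus ip ipp gp fp ->
  triv_minus ip ipm gm fm ->
  forall x y : H,
    in_hatA ip T Tadj x y <->
    exists (xp : Hp) (xm : Hm),
      (forall l : R[i], disc l -> l *: fm l x - fm l y = B l xp - xm) /\
      (forall l : R[i], disc l -> fp l x - l *: fp l y = xp - Bstar l^* xm).
Proof.
move=> [hip _] _ _ _ adj _ [[hipp _] [[hipm _] [_ [Gm_lin [_ [Gpm_onto [_ green]]]]]]]
  [B_adj [weyl_plus weyl_minus]] gpH gmH fpH fmH x y.
have Gp_inj l hl := (weyl_plus l hl).2.1.
have Gm_Nplus l hl := (weyl_plus l hl).2.2.1.
have Gm_inj l hl := (weyl_minus l hl).2.1.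
have Gp_Nminus l hl := (weyl_minus l hl).2.2.
split=> [hA | [xp [xm [Ex Ey]]]].
- exact: (in_hatA_weyl hip hipp hipm green B_adj Gm_Nplus Gp_Nminus
    gpH gmH fpH fmH hA).
- exact: (weyl_in_hatA hip hipp hipm adj green Gm_lin Gpm_onto B_adj Gp_inj Gm_inj
    Gm_Nplus Gp_Nminus gpH gmH fpH fmH Ex Ey).
Qed.
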